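(* For every $n\ge 0$, $$B(2n,0)=\sum_{\lambda\in\Lambda_n}\prod_{i=1}^n\lambda_i^2 .$$
   Context: A labeled ballot path is a lattice path from $(0,0)$ with steps $u=(1,1)$, $d=(1,-1)$ never going below the $x$-axis, each step carrying an integer label between $0$ and its height, where the height of a step is the smaller $y$-coordinate of its endpoints. $B(n,k)$ is the number of labeled ballot paths ending at $(n,k)$; thus $B(2n,0)$ counts labeled Dyck paths of length $2n$. $\Lambda_n$ is the set of integer sequences $\lambda_1\cdots\lambda_n$ with $\lambda_1=1$ and $1\le\lambda_j\le\lambda_{j-1}+1$ for $2\le j\le n$. *)

From mathcomp Require Import all_boot.
Set Implicit Arguments. Unset Strict Implicit. Unset Printing Implicit Defensive.

(* A labeled step: (true, l) = up step u=(1,1), (false, l) = down step d=(1,-1),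
   with integer label l.  [lbp_from y s k] : the labeled step sequence s, started
   at height y, never goes below the x-axis, every label lies between 0 and the
   height of its step (= smaller y-coordinate of its endpoints), and s ends at
   height k. *)
Fixpoint lbp_from (y : nat) (s : seq (bool * nat)) (k : nat) : bool :=
  match s with
  | [::] => y == k
  | (true, l) :: t => (l <= y) && lbp_from y.+1 t k
  | (false, l) :: t => (0 < y) && (l <= y.-1) && lbp_from y.-1 t k
  end.

Definition labeled_ballot (s : seq (bool * nat)) (k : nat) : bool :=
  lbp_from 0 s k.

(* B(n,k): number of labeled ballot paths ending at (n,k).  Labels are at most
   the height, hence at most n, so it suffices to enumerate labels in 'I_n.+1. *)
Definition B (n k : nat) : nat :=
  #|[set p : n.-tuple (bool * 'I_n.+1) |
      labeled_ballot [seq (x.1, nat_of_ord x.2) | x <- p] k]|.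

Definition in_Lambda (s : seq nat) : bool :=
  match s with
  | [::] => true
  | x :: t => (x == 1) && path (fun a b => (1 <= b) && (b <= a.+1)) x t
  end.

(* Lambda_n, as n-tuples; since lambda_j <= j <= n, values lie in 'I_n.+1. *)
Definition Lambda (n : nat) : {set n.-tuple 'I_n.+1} :=
  [set l : n.-tuple 'I_n.+1 | in_Lambda [seq nat_of_ord i | i <- l]].

(* Let W(m, y) (lbp_count) be the number of labeled paths of length m from
   height y down to 0.  An up step from height y admits y + 1 labels and a down
   step y labels, so W(m + 1, y) = (y + 1) W(m, y + 1) + y W(m, y - 1).  Let
   R(n, a) (lambda_weight) be the sum of the weights prod lambda_i^2 over the
   continuations lambda_1 ... lambda_n of a Lambda-sequence whose current value
   is a; then R(n + 1, a + 1) = (a + 2)^2 R(n, a + 2) + R(n + 1, a).  These two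
   recursions give W(2n + a, a) = a! R(n, a) by induction on n and then on a,
   and the theorem is the case a = 0. *)

From mathcomp Require Import all_boot zify.

Set Implicit Arguments. Unset Strict Implicit. Unset Printing Implicit Defensive.

Section BigTuple.
Variables (R : Type) (idx : R) (op : Monoid.com_law idx) (T : finType).

Lemma big_tuple0 (F : 0.-tuple T -> R) :
  \big[op/idx]_(p : 0.-tuple T) F p = F [tuple].
Proof. by rewrite (big_pred1 [tuple]) // => p; rewrite [p]tuple0 /= eqxx. Qed.

Lemma big_tupleS m (F : m.+1.-tuple T -> R) :
  \big[op/idx]_(p : m.+1.-tuple T) F p =
  \big[op/idx]_(x : T) \big[op/idx]_(p : m.-tuple T) F [tuple of x :: p].
Proof.
rewrite pair_bigA (reindex (fun q : T * m.-tuple T => [tuple of q.1 :: q.2])) //.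
exists (fun p : m.+1.-tuple T => (thead p, [tuple of behead p])).
  by move=> [x p] _; congr (_, _); apply: val_inj.
by move=> p _; rewrite [RHS]tuple_eta.
Qed.

End BigTuple.

Lemma sum_ord_ltn N y : y <= N -> \sum_(l < N) (l < y : nat) = y.
Proof.
move=> le_yN; rewrite -[RHS]card_ord -sum1_card (big_ord_widen N (fun=> 1)) //.
by rewrite [RHS]big_mkcond; apply: eq_bigr => l _; case: (l < y).
Qed.

Local Notation nat_labels p := [seq (x.1, nat_of_ord x.2) | x <- p].

(* A down step from height y has height y.-1, hence y admissible labels;
   for y = 0 the factor y kills the junk term with height 0.-1 = 0. *)
Fixpoint lbp_count (m y k : nat) : nat :=
  if m is m'.+1 then y.+1 * lbp_count m' y.+1 k + y * lbp_count m' y.-1 k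
  else (y == k : nat).

Lemma sum_lbp_from N m y k : y + m < N ->
  \sum_(p : m.-tuple (bool * 'I_N)) (lbp_from y (nat_labels p) k : nat) =
  lbp_count m y k.
Proof.
elim: m y => [|m IH] y lt_ymN; first by rewrite big_tuple0.
have first_step c z : c <= N -> z + m < N ->
    \sum_(j < N) \sum_(p : m.-tuple (bool * 'I_N))
       ((j < c) && lbp_from z (nat_labels p) k : nat) = c * lbp_count m z k.
  move=> le_cN lt_zmN.
  under eq_bigr => j _ do under eq_bigr => p _ do rewrite -mulnb.
  under eq_bigr => j _ do rewrite -big_distrr /= IH //.
  by rewrite -big_distrl /= sum_ord_ltn.
rewrite big_tupleS -(pair_big xpredT xpredT (fun b (l : 'I_N) =>
  \sum_(p : m.-tuple (bool * 'I_N)) (lbp_from y ((b, nat_of_ord l) :: nat_labels p) k : nat))).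
rewrite big_bool /=; congr (_ + _).
  under eq_bigr => j _ do under eq_bigr => p _ do rewrite -ltnS.
  by apply: first_step; lia.
have down_label j : (0 < y) && (j <= y.-1) = (j < y) by case: y {lt_ymN}.
under eq_bigr => j _ do under eq_bigr => p _ do rewrite down_label.
by apply: first_step; lia.
Qed.

Lemma lbp_count_short m y : m < y -> lbp_count m y 0 = 0.
Proof.
elim: m y => [|m IH] [|y] //= lt_my.
by rewrite !IH ?muln0 //; lia.
Qed.

Lemma lbp_count_diag a : lbp_count a a 0 = a`!.
Proof. by elim: a => //= a ->; rewrite lbp_count_short // muln0 add0n factS. Qed.

Definition lambda_step (a b : nat) : bool := (1 <= b) && (b <= a.+1).

Lemma in_Lambda_path s : in_Lambda s = path lambda_step 0 s.
Proof. by case: s => //= x t; congr (_ && _); rewrite eqn_leq andbC. Qed.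

(* The summand b = 0 vanishes, which is how the constraint 1 <= b is met. *)
Fixpoint lambda_weight (n a : nat) : nat :=
  if n is n'.+1 then \sum_(b < a.+2) b ^ 2 * lambda_weight n' b else 1.

Lemma lambda_step_weight a b : lambda_step a b * b ^ 2 = (b < a.+2) * b ^ 2.
Proof. by case: b. Qed.

Lemma sum_lambda_path N n a : a + n < N ->
  \sum_(p : n.-tuple 'I_N)
     (path lambda_step a [seq nat_of_ord i | i <- p] : nat) * \prod_(i <- p) i ^ 2 =
  lambda_weight n a.
Proof.
elim: n a => [|n IH] a lt_anN; first by rewrite big_tuple0 big_nil.
rewrite big_tupleS /=.
under eq_bigr => x _ do under eq_bigr => p _ do rewrite big_cons -mulnb mulnACA.
under eq_bigr => x _ do rewrite -big_distrr /= lambda_step_weight.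
rewrite (big_ord_widen N (fun b => b ^ 2 * lambda_weight n b)); last by lia.
rewrite [RHS]big_mkcond; apply: eq_bigr => x _.
by case: ltnP => [lt_xa | _]; rewrite ?mul1n ?mul0n ?IH //; lia.
Qed.


Lemma lambda_weightSS n a :
  lambda_weight n.+1 a.+1 = a.+2 ^ 2 * lambda_weight n a.+2 + lambda_weight n.+1 a.
Proof. by rewrite /= big_ord_recr addnC. Qed.

Lemma lbp_count_lambda_weight n a :
  lbp_count (2 * n + a) a 0 = a`! * lambda_weight n a.
Proof.
elim: n a => [|n IHn] a; first by rewrite muln0 add0n lbp_count_diag muln1.
elim: a => [|a IHa].
  have -> : 2 * n.+1 + 0 = (2 * n + 1).+1 by lia.
  by rewrite /= IHn big_ord_recr big_ord1 factS fact0 /=; lia.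
have -> : 2 * n.+1 + a.+1 = (2 * n + a.+2).+1 by lia.
rewrite [lbp_count _ _ _]/= IHn.
have -> : 2 * n + a.+2 = 2 * n.+1 + a by lia.
rewrite IHa lambda_weightSS !factS; lia.
Qed.

Theorem corollary4p3 (n : nat) :
  B (2 * n) 0 =
  \sum_(l in Lambda n) \prod_(i <- l) (nat_of_ord i) ^ 2.
Proof.
have B_sum : B (2 * n) 0 = \sum_(p : (2 * n).-tuple (bool * 'I_(2 * n).+1))
                              (labeled_ballot (nat_labels p) 0 : nat).
  by rewrite /B -sum1dep_card big_mkcond; apply: eq_bigr => p _; case: labeled_ballot.
have := lbp_count_lambda_weight n 0; rewrite addn0 mul1n => count_paths.
rewrite B_sum sum_lbp_from // count_paths -(sum_lambda_path (N := n.+1)) //.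
rewrite [RHS]big_mkcond; apply: eq_bigr => l _.
by rewrite inE in_Lambda_path; case: path; rewrite ?mul1n.
Qed.
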